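(* Let $p\in\mathbb{N}$, $\xi_k=\frac{k}{p}\pi$ for $k=0,\dots,p$, and let $\beta=(\beta_0,\dots,\beta_p)\in\mathbb{R}^{p+1}$. Define $g(\xi)=\sum_{j=0}^p\beta_j\cos(j\xi)$ and $\mathbf{g}=(g(\xi_0),\dots,g(\xi_p))\in\mathbb{R}^{p+1}$. Then $\|\beta\|_2\le\frac{2}{\sqrt{p+1}}\|\mathbf{g}\|_2$. *)

From mathcomp Require Import all_boot all_order all_algebra.
From mathcomp Require Import all_classical all_reals all_analysis.
Set Implicit Arguments. Unset Strict Implicit. Unset Printing Implicit Defensive.
Import Order.TTheory GRing.Theory Num.Theory.
Local Open Scope ring_scope.

Definition xi (R : realType) (p k : nat) : R := (k%:R / p%:R) * pi.

Definition gcos (R : realType) (p : nat) (beta : 'I_p.+1 -> R) (x : R) : R :=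
  \sum_(j < p.+1) beta j * cos (j%:R * x).

Definition norm2 (R : realType) (n : nat) (v : 'I_n -> R) : R :=
  Num.sqrt (\sum_(i < n) v i ^+ 2).

From mathcomp Require Import all_boot all_order all_algebra.
From mathcomp Require Import all_classical all_reals all_analysis.
From mathcomp Require Import ring lra zify.
Set Implicit Arguments. Unset Strict Implicit. Unset Printing Implicit Defensive.
Import Order.TTheory GRing.Theory Num.Theory.
Local Open Scope ring_scope.

(* Weight the nodes by the trapezoidal rule: 1/2 at xi_0 and xi_p, 1 elsewhere.
   By product-to-sum, the weighted inner product of k |-> cos (j xi_k) and
   k |-> cos (l xi_k) is half the sum of the weighted sums of cos (m xi_k) for
   m = j + l and m = |j - l|; multiplying by sin h with h = m pi / 2p and
   telescoping shows these vanish for 0 < m < 2p, while they equal p for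
   m = 0 and m = 2p.  So the sampled cosines of degree 0..p are orthogonal
   with squared weighted norms >= p/2, whence p/2 |beta|^2 is at most the
   weighted, hence the plain, squared norm of the samples of g.  For p >= 1,
   p/2 >= (p+1)/4, which is the constant of the theorem; p = 0 is trivial. *)

Section Trigonometry.
Variable R : realType.

Lemma sin_natr_mulpi (m : nat) : sin (m%:R * pi) = 0 :> R.
Proof. by rewrite mulr_natl -[_ *+ _]add0r (alternatingn (@sinDpi R)) sin0 mulr0. Qed.

Lemma cos_natr_mul2pi (m : nat) : cos (m%:R * (pi *+ 2)) = 1 :> R.
Proof. by rewrite mulr_natl -[_ *+ _]add0r (periodicn (@cosD2pi R)) cos0. Qed.

Lemma cos_mul_cos (x y : R) : cos x * cos y = (cos (x + y) + cos (x - y)) / 2.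
Proof. by rewrite cosD cosB; field. Qed.

Lemma sin_mul_sum_cos (n : nat) (h : R) :
  2 * sin h * \sum_(k < n.+1) cos (k%:R * (2 * h)) =
  sin ((n%:R * 2 + 1) * h) + sin h.
Proof.
elim: n => [|n IHn]; first by rewrite big_ord1 mul0r cos0 mul0r add0r mul1r; ring.
rewrite big_ord_recr mulrDr IHn /=.
have -> : ((n.+1)%:R * 2 + 1) * h = (n.+1)%:R * (2 * h) + h by rewrite -natr1; ring.
have -> : (n%:R * 2 + 1) * h = (n.+1)%:R * (2 * h) - h by rewrite -natr1; ring.
by rewrite sinB sinD; ring.
Qed.

End Trigonometry.

Section TrapezoidalSum.
Variables (R : realType) (p : nat).

Definition trapezoid (f : nat -> R) : R := \sum_(k < p.+1) f k - (f 0%N + f p) / 2.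

Lemma trapezoidD (f g : nat -> R) :
  trapezoid (fun k => f k + g k) = trapezoid f + trapezoid g.
Proof. by rewrite /trapezoid big_split /=; ring. Qed.

Lemma trapezoidZ (a : R) (f : nat -> R) :
  trapezoid (fun k => a * f k) = a * trapezoid f.
Proof. by rewrite /trapezoid -mulr_sumr; ring. Qed.

Lemma trapezoid_sum (I : Type) (r : seq I) (F : I -> nat -> R) :
  trapezoid (fun k => \sum_(i <- r) F i k) = \sum_(i <- r) trapezoid (F i).
Proof.
elim: r => [|i r IHr].
  rewrite big_nil /trapezoid; under eq_bigr do rewrite big_nil.
  by rewrite big1_eq !big_nil addr0 mul0r subrr.
rewrite big_cons -IHr -trapezoidD; congr trapezoid; apply: funext => k.
by rewrite big_cons.
Qed.

Lemma trapezoid_cst1 : trapezoid (fun=> 1) = p%:R.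
Proof. by rewrite /trapezoid sumr_const card_ord mulrSr; lra. Qed.

Lemma trapezoid_le_sum (f : nat -> R) :
  0 <= f 0%N -> 0 <= f p -> trapezoid f <= \sum_(k < p.+1) f k.
Proof. by rewrite /trapezoid => f0 fp; lra. Qed.

Lemma sin_mul_trapezoid_cos (h : R) :
  2 * sin h * trapezoid (fun k => cos (k%:R * (2 * h))) = sin (p%:R * (2 * h)) * cos h.
Proof.
rewrite /trapezoid mulrBr sin_mul_sum_cos mul0r cos0.
have -> : (p%:R * 2 + 1) * h = p%:R * (2 * h) + h by ring.
by rewrite sinD; field.
Qed.

End TrapezoidalSum.
Section CosineAtNodes.
Variables (R : realType) (p : nat).

Definition cos_node (m k : nat) : R := cos (m%:R * xi R p k).

Lemma trapezoid_cos_node0 : trapezoid p (cos_node 0) = p%:R.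
Proof.
rewrite -(trapezoid_cst1 R p); congr trapezoid; apply: funext => k.
by rewrite /cos_node mul0r cos0.
Qed.

Lemma trapezoid_cos_node_double : trapezoid p (cos_node p.*2) = p%:R.
Proof.
have [p0|p_gt0] := posnP p; first by rewrite [in p.*2]p0 trapezoid_cos_node0.
rewrite -(trapezoid_cst1 R p); congr trapezoid; apply: funext => k.
have pn0 : p%:R != 0 :> R by rewrite pnatr_eq0 -lt0n.
rewrite /cos_node.
have -> : p.*2%:R * xi R p k = k%:R * (pi *+ 2) by rewrite /xi -muln2 natrM; field.
exact: cos_natr_mul2pi.
Qed.

Lemma trapezoid_cos_node_eq0 (m : nat) :
  (0 < m < p.*2)%N -> trapezoid p (cos_node m) = 0.
Proof.
move=> /andP[m_gt0 m_lt]; have p_gt0 : (0 < p)%N by lia.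
have pn0 : p%:R != 0 :> R by rewrite pnatr_eq0 -lt0n.
pose h : R := m%:R * pi / (p%:R * 2).
have node_h k : m%:R * xi R p k = k%:R * (2 * h) by rewrite /xi /h; field.
have sin_h_gt0 : 0 < sin h.
  apply: sin_gt0_pi; rewrite divr_gt0 ?mulr_gt0 ?pi_gt0 ?ltr0n //=.
  rewrite ltr_pdivrMr ?mulr_gt0 ?ltr0n // mulrC ltr_pM2l ?pi_gt0 //.
  by rewrite -natrM ltr_nat muln2.
have := sin_mul_trapezoid_cos p h.
have -> : p%:R * (2 * h) = m%:R * pi by rewrite /h; field.
rewrite sin_natr_mulpi mul0r => /eqP; rewrite !mulf_eq0 pnatr_eq0 (gt_eqF sin_h_gt0) /=.
have -> : (fun k => cos (k%:R * (2 * h))) = cos_node m.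
  by apply: funext => k; rewrite /cos_node node_h.
exact/eqP.
Qed.

Lemma trapezoid_cos_node_mul (j l : nat) : (l <= j)%N ->
  trapezoid p (fun k => cos_node j k * cos_node l k) =
  (trapezoid p (cos_node (j + l)) + trapezoid p (cos_node (j - l))) / 2.
Proof.
move=> lj; rewrite mulrC -trapezoidD -trapezoidZ; congr trapezoid; apply: funext => k.
by rewrite /cos_node natrD natrB // mulrDl mulrBl cos_mul_cos mulrC.
Qed.

Lemma trapezoid_cos_node_orthogonal (j l : nat) : (j <= p)%N -> (l <= p)%N -> j != l ->
  trapezoid p (fun k => cos_node j k * cos_node l k) = 0.
Proof.
wlog lj : j l / (l < j)%N => [wlog_lt|] jp lp jl.
  have [/wlog_lt->//|gt_jl|eq_jl] := ltngtP l j; last by rewrite eq_jl eqxx in jl.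
  have -> : (fun k => cos_node j k * cos_node l k) = (fun k => cos_node l k * cos_node j k).
    by apply: funext => k; rewrite mulrC.
  by rewrite wlog_lt // eq_sym.
rewrite (trapezoid_cos_node_mul (ltnW lj)) !trapezoid_cos_node_eq0.
- by rewrite addr0 mul0r.
- lia.
- lia.
Qed.

Lemma trapezoid_cos_node_sqr_ge (j : nat) : (j <= p)%N ->
  p%:R / 2 <= trapezoid p (fun k => cos_node j k * cos_node j k).
Proof.
move=> jp; rewrite trapezoid_cos_node_mul // subnn trapezoid_cos_node0 addnn.
suff : 0 <= trapezoid p (cos_node j.*2) by lra.
have [->|j_gt0] := posnP j; first by rewrite trapezoid_cos_node0 ler0n.
have [->|j_neq] := eqVneq j p; first by rewrite trapezoid_cos_node_double ler0n.
by rewrite trapezoid_cos_node_eq0 //; lia.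
Qed.

End CosineAtNodes.

Lemma trapezoid_gcos_sqr (R : realType) (p : nat) (beta : 'I_p.+1 -> R) :
  trapezoid p (fun k => gcos beta (xi R p k) ^+ 2) =
  \sum_(j < p.+1) beta j ^+ 2 * trapezoid p (fun k => cos_node R p j k * cos_node R p j k).
Proof.
have -> : (fun k => gcos beta (xi R p k) ^+ 2) = (fun k => \sum_(j < p.+1) \sum_(l < p.+1)
    beta j * beta l * (cos_node R p j k * cos_node R p l k)).
  apply: funext => k; rewrite /gcos expr2 big_distrlr.
  by apply: eq_bigr => j _; apply: eq_bigr => l _; rewrite /= mulrACA.
rewrite trapezoid_sum; apply: eq_bigr => j _.
rewrite trapezoid_sum (bigD1 j) //= big1 ?addr0 => [|l lj]; rewrite trapezoidZ.
  by rewrite expr2.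
by rewrite trapezoid_cos_node_orthogonal ?mulr0 ?leq_ord // eq_sym.
Qed.

Lemma sum_sqr_le_sum_gcos_sqr (R : realType) (p : nat) (beta : 'I_p.+1 -> R) :
  p%:R / 2 * \sum_(j < p.+1) beta j ^+ 2 <= \sum_(k < p.+1) gcos beta (xi R p k) ^+ 2.
Proof.
apply: le_trans (@trapezoid_le_sum R p (fun k => gcos beta (xi R p k) ^+ 2)
  (sqr_ge0 _) (sqr_ge0 _)).
rewrite trapezoid_gcos_sqr mulr_sumr; apply: ler_sum => j _.
by rewrite mulrC ler_wpM2l ?sqr_ge0 ?trapezoid_cos_node_sqr_ge ?leq_ord.
Qed.

Lemma sqrtr_le_div_sqrtr (R : rcfType) (n a b : R) : 0 < n -> 0 <= b ->
  n * a <= 4 * b -> Num.sqrt a <= 2 / Num.sqrt n * Num.sqrt b.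
Proof.
move=> n_gt0 b_ge0 le_na.
have -> : 2 / Num.sqrt n * Num.sqrt b = Num.sqrt (4 / n * b).
  rewrite sqrtrM ?divr_ge0 ?ltW // sqrtrM ?ler0n // sqrtrV ?ltW //.
  have -> : 4 = 2 ^+ 2 :> R by rewrite expr2 -natrM.
  by rewrite sqrtr_sqr ger0_norm.
by apply: ler_wsqrtr; rewrite mulrAC ler_pdivlMr // mulrC.
Qed.

Theorem mainTheorem16 (R : realType) (p : nat) (beta : 'I_p.+1 -> R) :
  norm2 beta <=
  2 / Num.sqrt (p.+1)%:R * norm2 (fun k : 'I_p.+1 => gcos beta (xi R p k)).
Proof.
case: p beta => [|p] beta.
  rewrite /norm2 /gcos !big_ord1 /= mul0r cos0 mulr1 sqrtr1 divr1.
  have := sqrtr_ge0 (beta ord0 ^+ 2); lra.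
apply: sqrtr_le_div_sqrtr; first by rewrite ltr0n.
  by rewrite sumr_ge0 // => k _; rewrite sqr_ge0.
have := sum_sqr_le_sum_gcos_sqr beta.
set Sb := \sum_(j < _) beta j ^+ 2; set Sg := \sum_(k < _) _.
have Sb_ge0 : 0 <= Sb by rewrite sumr_ge0 // => j _; rewrite sqr_ge0.
have : 0 <= p%:R * Sb by rewrite mulr_ge0 ?ler0n.
have e1 : p.+1%:R = p%:R + 1 :> R by rewrite natr1.
have e2 : p.+2%:R = p%:R + 2 :> R by rewrite -addn2 natrD.
rewrite e1 e2; lra.
Qed.
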